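(* On $H_n\setminus\{0\}$, let $\rho=(|z|^4+t^2)^{1/4}$. The dilations $\tau_a(z,t)=(az,a^2t)$, $a>0$, and the CR inversion $(z,t)\mapsto(z^*,t^* )$ with $z^*=z/w$, $t^*=-t/|w|^2$, $w=t+i|z|^2$, are CR automorphisms of $H_n\setminus\{0\}$ which preserve the contact form $\Theta/\rho^2$. Moreover, the Tanaka–Webster scalar curvature of $\Theta/\rho^2$ is $$R_{\Theta/\rho^2}=\frac{n(n+1)|z|^2}{2\rho^2},$$ in particular it is $\ge 0$ everywhere and $>0$ wherever $z\neq 0$.
   Context: $H_n=\mathbb{C}^n\times\mathbb{R}$ with coordinates $(z,t)$, $z=(z^1,\dots,z^n)$, is the Heisenberg group with its standard CR structure and standard contact form $\Theta=dt+i\sum_{\alpha=1}^n(z^\alpha dz^{\bar\alpha}-z^{\bar\alpha}dz^\alpha)$, for which the Tanaka–Webster scalar curvature vanishes. Curvature is normalized as in Jerison–Lee: if $\tilde\theta=u^{2/n}\theta$ with $u>0$, then $-(2+\tfrac2n)\Delta_b u+R_\theta u=R_{\tilde\theta}u^{(n+2)/n}$, where $\Delta_b$ is the sublaplacian of $\theta$. *)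

From Stdlib Require Import Reals.
Open Scope R_scope.

(* Points (and tangent vectors) of H_n = C^n x R, in real coordinates
   z^alpha = x_alpha + i y_alpha (alpha = 0..n-1), t.  Points of H_n are the
   records whose x,y components vanish for indices >= n. *)
Record pt := mkpt { px : nat -> R; py : nat -> R; ptt : R }.

Fixpoint rsum (n : nat) (f : nat -> R) : R :=
  match n with O => 0 | S m => rsum m f + f m end.

Definition in_H (n : nat) (p : pt) : Prop :=
  forall i, (n <= i)%nat -> px p i = 0 /\ py p i = 0.

Definition origin : pt := mkpt (fun _ => 0) (fun _ => 0) 0.

Definition Hstar (n : nat) (p : pt) : Prop := in_H n p /\ p <> origin.

Definition padd (p q : pt) : pt :=
  mkpt (fun i => px p i + px q i) (fun i => py p i + py q i) (ptt p + ptt q).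
Definition pscale (s : R) (p : pt) : pt :=
  mkpt (fun i => s * px p i) (fun i => s * py p i) (s * ptt p).

Inductive cidx := CX (i : nat) | CY (i : nat) | CT.
Definition cidx_ok (n : nat) (c : cidx) : Prop :=
  match c with CX i => (i < n)%nat | CY i => (i < n)%nat | CT => True end.
Definition coord (p : pt) (c : cidx) : R :=
  match c with CX i => px p i | CY i => py p i | CT => ptt p end.
Definition ebasis (c : cidx) : pt :=
  match c with
  | CX i => mkpt (fun j => if Nat.eqb j i then 1 else 0) (fun _ => 0) 0
  | CY i => mkpt (fun _ => 0) (fun j => if Nat.eqb j i then 1 else 0) 0
  | CT => mkpt (fun _ => 0) (fun _ => 0) 1
  end.

Definition zsq (n : nat) (p : pt) : R := rsum n (fun i => px p i ^ 2 + py p i ^ 2).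
Definition rho (n : nat) (p : pt) : R := sqrt (sqrt (zsq n p ^ 2 + ptt p ^ 2)).

Definition dist (n : nat) (p q : pt) : R :=
  rsum n (fun i => Rabs (px p i - px q i) + Rabs (py p i - py q i))
  + Rabs (ptt p - ptt q).
Definition cont_on (n : nat) (U : pt -> Prop) (f : pt -> R) : Prop :=
  forall p, U p -> forall eps, eps > 0 -> exists d, d > 0 /\
    forall q, U q -> dist n p q < d -> Rabs (f q - f p) < eps.

Definition has_dderiv (f : pt -> R) (p v : pt) (l : R) : Prop :=
  derivable_pt_lim (fun s => f (padd p (pscale s v))) 0 l.

Fixpoint Ck (n k : nat) (U : pt -> Prop) (f : pt -> R) : Prop :=
  match k with
  | O => cont_on n U f
  | S k' => cont_on n U f /\
      forall c, cidx_ok n c -> exists g : pt -> R,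
        (forall p, U p -> has_dderiv f p (ebasis c) (g p)) /\ Ck n k' U g
  end.
Definition smooth_on (n : nat) (U : pt -> Prop) (f : pt -> R) : Prop :=
  forall k, Ck n k U f.
Definition smooth_map (n : nat) (U : pt -> Prop) (F : pt -> pt) : Prop :=
  forall c, cidx_ok n c -> smooth_on n U (fun q => coord (F q) c).

Definition has_dmap (n : nat) (F : pt -> pt) (p v w : pt) : Prop :=
  in_H n w /\ forall c, cidx_ok n c ->
    has_dderiv (fun q => coord (F q) c) p v (coord w c).

(* Theta = dt + i sum (z dz̄ - z̄ dz) = dt + 2 sum (x dy - y dx) *)
Definition Theta (n : nat) (p v : pt) : R :=
  ptt v + 2 * rsum n (fun i => px p i * py v i - py p i * px v i).

(* Complex structure J on ker Theta_p: the CR structure T^{1,0} is spanned by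
   Z_a = d/dz^a + i z̄^a d/dt = (X_a - i Y_a)/2, X_a = d/dx_a + 2 y_a d/dt,
   Y_a = d/dy_a - 2 x_a d/dt, and J X_a = Y_a, J Y_a = - X_a. *)
Definition Jmap (n : nat) (p v : pt) : pt :=
  mkpt (fun i => - py v i) (fun i => px v i)
       (-2 * rsum n (fun i => px p i * px v i + py p i * py v i)).

Definition CR_aut (n : nat) (F : pt -> pt) : Prop :=
  let U := Hstar n in
  (exists G : pt -> pt,
     (forall p, U p -> U (F p)) /\ (forall p, U p -> U (G p)) /\
     (forall p, U p -> G (F p) = p) /\ (forall p, U p -> F (G p) = p) /\
     smooth_map n U F /\ smooth_map n U G) /\
  (forall p v w, U p -> in_H n v -> Theta n p v = 0 -> has_dmap n F p v w ->
     Theta n (F p) w = 0 /\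
     forall w', has_dmap n F p (Jmap n p v) w' -> w' = Jmap n (F p) w).

Definition preserves_form (n : nat) (F : pt -> pt) : Prop :=
  forall p v w, Hstar n p -> in_H n v -> has_dmap n F p v w ->
    Theta n (F p) w / rho n (F p) ^ 2 = Theta n p v / rho n p ^ 2.

Definition dil (a : R) (p : pt) : pt :=
  mkpt (fun i => a * px p i) (fun i => a * py p i) (a ^ 2 * ptt p).
(* z* = z / w, t* = -t/|w|^2, w = t + i|z|^2, |w|^2 = t^2 + |z|^4 *)
Definition cr_inv (n : nat) (p : pt) : pt :=
  let s := zsq n p in let t := ptt p in let W := t ^ 2 + s ^ 2 in
  mkpt (fun i => (px p i * t + py p i * s) / W)
       (fun i => (py p i * t - px p i * s) / W)
       (- t / W).

(* Sublaplacian of Theta: Delta_b u = (1/4) sum_a (X_a X_a u + Y_a Y_a u)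
   (= sum_{a} h^{a b̄}(u_{a b̄} + u_{b̄ a})/2... i.e. (1/2) sum (Z_a Z_ā + Z_ā Z_a) u,
   with Levi form h_{a b̄} = 2 delta). *)
Definition Xv (p : pt) (a : nat) : pt := padd (ebasis (CX a)) (pscale (2 * py p a) (ebasis CT)).
Definition Yv (p : pt) (a : nat) : pt := padd (ebasis (CY a)) (pscale (-2 * px p a) (ebasis CT)).

Definition is_sublap (n : nat) (U : pt -> Prop) (u L : pt -> R) : Prop :=
  exists gx gy hx hy : nat -> pt -> R,
    forall p, U p ->
      (forall a, (a < n)%nat ->
         has_dderiv u p (Xv p a) (gx a p) /\ has_dderiv u p (Yv p a) (gy a p) /\
         has_dderiv (gx a) p (Xv p a) (hx a p) /\ has_dderiv (gy a) p (Yv p a) (hy a p)) /\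
      L p = / 4 * rsum n (fun a => hx a p + hy a p).

(* Tanaka-Webster scalar curvature Rc of u^{2/n} Theta (u > 0) on U, via the
   Jerison-Lee transformation law with R_Theta = 0:
   -(2+2/n) Delta_b u = Rc u^{(n+2)/n}. *)
Definition TW_scal_conf (n : nat) (U : pt -> Prop) (u Rc : pt -> R) : Prop :=
  exists L, is_sublap n U u L /\
    forall p, U p ->
      - (2 + 2 / INR n) * L p = Rc p * Rpower (u p) ((INR n + 2) / INR n).

(* The dilation and the CR inversion are explicit smooth maps of H_n \ {0} with
   smooth inverses (the inversion squares to (z, t) |-> (-z, t)).  Their
   differentials, computed coordinatewise, multiply Theta by a^2 and by 1/|w|^2
   respectively and commute with J on ker Theta; since rho o tau_a = a rho and
   rho^2 o (CR inversion) = rho^2 / |w|^2, both preserve Theta / rho^2.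
   For the curvature, Theta / rho^2 = u^(2/n) Theta with u = rho^-n; a direct
   computation gives Delta_b u = - n^2 |z|^2 / (4 rho^(n+4)), and the Jerison-Lee
   law with R_Theta = 0 yields R = n (n+1) |z|^2 / (2 rho^2). *)

From Pilot Require Import Defs.
From Stdlib Require Import Reals Lra Lia Psatz FunctionalExtensionality.
Open Scope R_scope.

Lemma rsum_ext m f g : (forall i, (i < m)%nat -> f i = g i) -> rsum m f = rsum m g.
Proof. induction m; intros H; simpl; auto. rewrite IHm, H; auto. Qed.

Lemma rsum_plus m f g : rsum m (fun i => f i + g i) = rsum m f + rsum m g.
Proof. induction m; simpl; [ring | rewrite IHm; ring]. Qed.

Lemma rsum_scal m c f : rsum m (fun i => c * f i) = c * rsum m f.
Proof. induction m; simpl; [ring | rewrite IHm; ring]. Qed.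

Lemma rsum_const m c : rsum m (fun _ => c) = INR m * c.
Proof. induction m; simpl rsum; [simpl; ring | rewrite IHm, S_INR; ring]. Qed.

Lemma rsum_nonneg m f : (forall i, 0 <= f i) -> 0 <= rsum m f.
Proof. intros H; induction m; simpl; [lra | specialize (H m); lra]. Qed.

Lemma rsum_ge_term m f i : (forall j, 0 <= f j) -> (i < m)%nat -> f i <= rsum m f.
Proof.
  intros H; induction m; intros Hi; [lia|]; simpl.
  destruct (Nat.eq_dec i m) as [->|Hne].
  - pose proof (rsum_nonneg m f H); lra.
  - specialize (IHm ltac:(lia)); specialize (H m); lra.
Qed.

Lemma rsum_kronecker m a f : (a < m)%nat ->
  rsum m (fun i => if Nat.eqb i a then f i else 0) = f a.
Proof.
  induction m; intros Ha; [lia|]; simpl.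
  destruct (Nat.eq_dec a m) as [->|Hne].
  - rewrite Nat.eqb_refl, (rsum_ext m _ (fun _ => 0)), rsum_const; [ring|].
    intros i Hi; destruct (Nat.eqb_spec i m); [lia | auto].
  - rewrite IHm by lia; destruct (Nat.eqb_spec m a); [lia | ring].
Qed.

(** * Directional derivatives and smoothness *)

Lemma pt_ext p q : px p = px q -> py p = py q -> ptt p = ptt q -> p = q.
Proof. destruct p, q; simpl; intros -> -> ->; auto. Qed.

Lemma padd_pscale0 p v : padd p (pscale 0 v) = p.
Proof. apply pt_ext; try (apply functional_extensionality; intro); simpl; ring. Qed.

Lemma has_dderiv_ext f g p v l :
  (forall q, f q = g q) -> has_dderiv f p v l -> has_dderiv g p v l.
Proof. intros H; apply derivable_pt_lim_ext; intros; apply H. Qed.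

Lemma derivable_pt_lim_eq f x l l' : l = l' -> derivable_pt_lim f x l -> derivable_pt_lim f x l'.
Proof. intros ->; auto. Qed.

Lemma has_dderiv_eq f p v l l' : l = l' -> has_dderiv f p v l -> has_dderiv f p v l'.
Proof. apply derivable_pt_lim_eq. Qed.

Lemma has_dderiv_unique f p v l1 l2 :
  has_dderiv f p v l1 -> has_dderiv f p v l2 -> l1 = l2.
Proof. apply uniqueness_limite. Qed.

Lemma has_dderiv_const c p v : has_dderiv (fun _ => c) p v 0.
Proof. apply derivable_pt_lim_const. Qed.

Lemma has_dderiv_coord c p v : has_dderiv (fun q => coord q c) p v (coord v c).
Proof.
  apply (has_dderiv_eq _ _ _ (0 + coord v c * 1)); [ring|].
  apply derivable_pt_lim_ext with (fct_cte (coord p c) + mult_real_fct (coord v c) id)%F;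
    [intros; unfold plus_fct, fct_cte, mult_real_fct, id; destruct c; simpl; ring|].
  apply derivable_pt_lim_plus;
    [apply derivable_pt_lim_const | apply derivable_pt_lim_scal, derivable_pt_lim_id].
Qed.

Lemma has_dderiv_plus f g p v a b : has_dderiv f p v a -> has_dderiv g p v b ->
  has_dderiv (fun q => f q + g q) p v (a + b).
Proof. apply derivable_pt_lim_plus. Qed.

Lemma has_dderiv_mult f g p v a b : has_dderiv f p v a -> has_dderiv g p v b ->
  has_dderiv (fun q => f q * g q) p v (a * g p + f p * b).
Proof.
  intros Hf Hg; pose proof (derivable_pt_lim_mult _ _ _ _ _ Hf Hg) as H.
  cbv beta in H; rewrite padd_pscale0 in H; exact H.
Qed.

Lemma has_dderiv_scal c f p v a :
  has_dderiv f p v a -> has_dderiv (fun q => c * f q) p v (c * a).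
Proof.
  intros H; eapply has_dderiv_eq;
    [|apply (has_dderiv_mult (fun _ => c) f); [apply has_dderiv_const | exact H]].
  ring.
Qed.

Lemma has_dderiv_sq f p v a :
  has_dderiv f p v a -> has_dderiv (fun q => f q ^ 2) p v (2 * f p * a).
Proof.
  intros H; eapply has_dderiv_ext;
    [|eapply has_dderiv_eq; [|apply (has_dderiv_mult f f); eauto]]; intros; simpl; ring.
Qed.

Lemma has_dderiv_inv f p v a : f p <> 0 -> has_dderiv f p v a ->
  has_dderiv (fun q => / f q) p v (- a / f p ^ 2).
Proof.
  intros Hn Hf.
  assert (H0 : (fun s => f (padd p (pscale s v))) 0 <> 0)
    by (cbv beta; rewrite padd_pscale0; auto).
  pose proof (derivable_pt_lim_div _ _ _ _ _ (derivable_pt_lim_const 1 0) Hf H0) as H.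
  cbv beta in H; unfold fct_cte in H; rewrite padd_pscale0 in H.
  eapply has_dderiv_eq; [|eapply derivable_pt_lim_ext; [|apply H]].
  - unfold Rsqr; field; auto.
  - intros; unfold div_fct, fct_cte, Rdiv; ring.
Qed.

Lemma has_dderiv_rsum m (f : nat -> pt -> R) a p v :
  (forall i, (i < m)%nat -> has_dderiv (f i) p v (a i)) ->
  has_dderiv (fun q => rsum m (fun i => f i q)) p v (rsum m a).
Proof.
  induction m; intros H; simpl; [apply has_dderiv_const|].
  apply has_dderiv_plus; [apply IHm; intros |]; apply H; lia.
Qed.

Lemma has_dderiv_px i p v : has_dderiv (fun q => px q i) p v (px v i).
Proof. exact (has_dderiv_coord (CX i) p v). Qed.

Lemma has_dderiv_py i p v : has_dderiv (fun q => py q i) p v (py v i).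
Proof. exact (has_dderiv_coord (CY i) p v). Qed.

Lemma has_dderiv_ptt p v : has_dderiv ptt p v (ptt v).
Proof. exact (has_dderiv_coord CT p v). Qed.

Lemma dist_coord n p q c : cidx_ok n c -> Rabs (coord q c - coord p c) <= Defs.dist n p q.
Proof.
  intros Hc; unfold Defs.dist.
  set (f := fun i => Rabs (px p i - px q i) + Rabs (py p i - py q i)).
  assert (Hf : forall j, 0 <= f j)
    by (intros j; pose proof (Rabs_pos (px p j - px q j));
        pose proof (Rabs_pos (py p j - py q j)); unfold f; lra).
  pose proof (Rabs_pos (ptt p - ptt q)).
  destruct c as [i|i|]; simpl in *; rewrite Rabs_minus_sym.
  - pose proof (rsum_ge_term n f i Hf Hc); pose proof (Rabs_pos (py p i - py q i));
      unfold f in *; lra.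
  - pose proof (rsum_ge_term n f i Hf Hc); pose proof (Rabs_pos (px p i - px q i));
      unfold f in *; lra.
  - pose proof (rsum_nonneg n f Hf); lra.
Qed.

Lemma Rplus_continuous2 a0 b0 eps : eps > 0 -> exists d, d > 0 /\
  forall a b, Rabs (a - a0) < d -> Rabs (b - b0) < d -> Rabs (a + b - (a0 + b0)) < eps.
Proof.
  intros He; exists (eps / 2); split; [lra|]; intros a b Ha Hb.
  replace (a + b - (a0 + b0)) with ((a - a0) + (b - b0)) by ring.
  eapply Rle_lt_trans; [apply Rabs_triang | lra].
Qed.

Lemma Rmult_continuous2 a0 b0 eps : eps > 0 -> exists d, d > 0 /\
  forall a b, Rabs (a - a0) < d -> Rabs (b - b0) < d -> Rabs (a * b - a0 * b0) < eps.
Proof.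
  intros He; set (K := 1 + Rabs a0 + Rabs b0).
  assert (HK : K >= 1) by (unfold K; pose proof (Rabs_pos a0); pose proof (Rabs_pos b0); lra).
  exists (Rmin 1 (eps / (2 * K))); split; [apply Rmin_pos; [lra | apply Rdiv_lt_0_compat; lra]|].
  intros a b Ha Hb; set (d := Rmin 1 (eps / (2 * K))) in *.
  assert (Hd1 : d <= 1) by apply Rmin_l.
  assert (HdK : d * K <= eps / 2)
    by (apply Rle_trans with (eps / (2 * K) * K);
        [apply Rmult_le_compat_r; [lra | apply Rmin_r] | right; field; lra]).
  assert (Hb' : Rabs b <= Rabs b0 + 1).
  { pose proof (Rabs_triang b0 (b - b0)); replace (b0 + (b - b0)) with b in * by ring; lra. }
  replace (a * b - a0 * b0) with ((a - a0) * b + a0 * (b - b0)) by ring.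
  eapply Rle_lt_trans; [apply Rabs_triang|]; rewrite !Rabs_mult.
  pose proof (Rabs_pos (a - a0)); pose proof (Rabs_pos a0); pose proof (Rabs_pos b).
  assert (Rabs (a - a0) * Rabs b <= d * (Rabs b0 + 1)) by (apply Rmult_le_compat; lra).
  assert (Rabs a0 * Rabs (b - b0) <= Rabs a0 * d) by (apply Rmult_le_compat_l; lra).
  unfold K in HdK; lra.
Qed.

Lemma Rinv_continuous a0 eps : a0 <> 0 -> eps > 0 -> exists d, d > 0 /\
  forall a, Rabs (a - a0) < d -> Rabs (/ a - / a0) < eps.
Proof.
  intros Ha He.
  assert (C : continuity_pt (/ id) a0)
    by (apply continuity_pt_inv; [apply derivable_continuous_pt, derivable_pt_id | auto]).
  destruct (C eps He) as [d [Hd H]]; exists d; split; auto; intros a Hda.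
  destruct (Req_dec a a0) as [->|Hne].
  - unfold Rminus; rewrite Rplus_opp_r, Rabs_R0; auto.
  - apply (H a); repeat split; auto.
Qed.

Section Smoothness.
Variables (n : nat) (U : pt -> Prop).

Lemma cont_on_comp2 (f g : pt -> R) (h : R -> R -> R) :
  cont_on n U f -> cont_on n U g ->
  (forall a0 b0 eps, eps > 0 -> exists d, d > 0 /\
     forall a b, Rabs (a - a0) < d -> Rabs (b - b0) < d -> Rabs (h a b - h a0 b0) < eps) ->
  cont_on n U (fun q => h (f q) (g q)).
Proof.
  intros Hf Hg Hh p Up eps He.
  destruct (Hh (f p) (g p) eps He) as [d [Hd Hd']].
  destruct (Hf p Up d Hd) as [d1 [Hd1 H1]]; destruct (Hg p Up d Hd) as [d2 [Hd2 H2]].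
  exists (Rmin d1 d2); split; [apply Rmin_pos; auto|]; intros q Uq Hq.
  pose proof (Rmin_l d1 d2); pose proof (Rmin_r d1 d2).
  apply Hd'; [apply H1 | apply H2]; auto; lra.
Qed.

Lemma cont_on_const c : cont_on n U (fun _ => c).
Proof.
  intros p Up eps He; exists 1; split; [lra|]; intros.
  unfold Rminus; rewrite Rplus_opp_r, Rabs_R0; auto.
Qed.

Lemma cont_on_coord c : cidx_ok n c -> cont_on n U (fun q => coord q c).
Proof.
  intros Hc p Up eps He; exists eps; split; auto; intros q Uq Hq.
  eapply Rle_lt_trans; [apply dist_coord|]; eauto.
Qed.

Lemma cont_on_plus f g : cont_on n U f -> cont_on n U g -> cont_on n U (fun q => f q + g q).
Proof. intros Hf Hg; apply (cont_on_comp2 f g Rplus Hf Hg), Rplus_continuous2. Qed.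

Lemma cont_on_mult f g : cont_on n U f -> cont_on n U g -> cont_on n U (fun q => f q * g q).
Proof. intros Hf Hg; apply (cont_on_comp2 f g Rmult Hf Hg), Rmult_continuous2. Qed.

Lemma cont_on_inv f : (forall p, U p -> f p <> 0) -> cont_on n U f ->
  cont_on n U (fun q => / f q).
Proof.
  intros Hn Hf p Up eps He.
  destruct (Rinv_continuous (f p) eps (Hn p Up) He) as [d [Hd Hd']].
  destruct (Hf p Up d Hd) as [d1 [Hd1 H1]]; exists d1; split; auto.
Qed.

Lemma Ck_S_Ck k f : Ck n (S k) U f -> Ck n k U f.
Proof.
  revert f; induction k; intros f H; simpl in *; [tauto|].
  destruct H as [Hc Hd]; split; auto; intros c hc.
  destruct (Hd c hc) as [g [Hg Hk]]; exists g; split; auto.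
Qed.

Lemma Ck_ext k f g : (forall q, f q = g q) -> Ck n k U f -> Ck n k U g.
Proof. intros H; replace g with f; auto; apply functional_extensionality; auto. Qed.

Lemma Ck_const k c : Ck n k U (fun _ => c).
Proof.
  revert c; induction k; intros c; simpl; [apply cont_on_const|].
  split; [apply cont_on_const|].
  intros; exists (fun _ => 0); split; [intros; apply has_dderiv_const | apply IHk].
Qed.

Lemma Ck_coord k c : cidx_ok n c -> Ck n k U (fun q => coord q c).
Proof.
  intros Hc; destruct k; simpl; [apply cont_on_coord; auto|].
  split; [apply cont_on_coord; auto|]; intros c' _.
  exists (fun _ => coord (ebasis c') c); split; [intros; apply has_dderiv_coord | apply Ck_const].
Qed.

Lemma Ck_plus k f g : Ck n k U f -> Ck n k U g -> Ck n k U (fun q => f q + g q).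
Proof.
  revert f g; induction k; intros f g Hf Hg; simpl in *; [apply cont_on_plus; auto|].
  destruct Hf as [cf df], Hg as [cg dg]; split; [apply cont_on_plus; auto|].
  intros c hc; destruct (df c hc) as [f' [Hf' Cf']], (dg c hc) as [g' [Hg' Cg']].
  exists (fun q => f' q + g' q); split; [intros; apply has_dderiv_plus; auto | auto].
Qed.

Lemma Ck_mult k f g : Ck n k U f -> Ck n k U g -> Ck n k U (fun q => f q * g q).
Proof.
  revert f g; induction k; intros f g Hf Hg; [simpl in *; apply cont_on_mult; auto|].
  pose proof (Ck_S_Ck _ _ Hf) as Mf; pose proof (Ck_S_Ck _ _ Hg) as Mg.
  destruct Hf as [cf df], Hg as [cg dg]; split; [apply cont_on_mult; auto|].
  intros c hc; destruct (df c hc) as [f' [Hf' Cf']], (dg c hc) as [g' [Hg' Cg']].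
  exists (fun q => f' q * g q + f q * g' q).
  split; [intros; apply has_dderiv_mult; auto | apply Ck_plus; auto].
Qed.

Lemma Ck_inv k f : (forall p, U p -> f p <> 0) -> Ck n k U f -> Ck n k U (fun q => / f q).
Proof.
  revert f; induction k; intros f Hn Hf; [simpl in *; apply cont_on_inv; auto|].
  pose proof (Ck_S_Ck _ _ Hf) as Mf.
  destruct Hf as [cf df]; split; [apply cont_on_inv; auto|].
  intros c hc; destruct (df c hc) as [f' [Hf' Cf']].
  exists (fun q => (-1 * f' q) * (/ f q * / f q)); split.
  - intros p Up; eapply has_dderiv_eq; [|apply has_dderiv_inv; auto]; field; auto.
  - apply Ck_mult; apply Ck_mult; auto; apply Ck_const.
Qed.

Lemma Ck_rsum k m (f : nat -> pt -> R) : (forall i, (i < m)%nat -> Ck n k U (f i)) ->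
  Ck n k U (fun q => rsum m (fun i => f i q)).
Proof.
  induction m; intros H; simpl; [apply Ck_const|].
  apply Ck_plus; [apply IHm; intros |]; apply H; lia.
Qed.

End Smoothness.

(** * Points of H_n and the homogeneous norm *)

Lemma in_H_ext n p q : in_H n p -> in_H n q ->
  (forall c, cidx_ok n c -> coord p c = coord q c) -> p = q.
Proof.
  intros Hp Hq H; apply pt_ext; try (apply functional_extensionality; intros i);
    [destruct (Compare_dec.lt_dec i n) .. | apply (H CT I)].
  - apply (H (CX i)); auto.
  - destruct (Hp i ltac:(lia)) as [-> _], (Hq i ltac:(lia)) as [-> _]; auto.
  - apply (H (CY i)); auto.
  - destruct (Hp i ltac:(lia)) as [_ ->], (Hq i ltac:(lia)) as [_ ->]; auto.
Qed.

Lemma zsq_nonneg n p : 0 <= zsq n p.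
Proof. apply rsum_nonneg; intros; nra. Qed.

Lemma zsq_pos n p i : (i < n)%nat -> px p i <> 0 \/ py p i <> 0 -> 0 < zsq n p.
Proof.
  intros Hi Hne.
  pose proof (rsum_ge_term n (fun i => px p i ^ 2 + py p i ^ 2) i ltac:(intros; nra) Hi).
  unfold zsq; destruct Hne; nra.
Qed.

Lemma zsq_origin n : zsq n origin = 0.
Proof. unfold zsq; rewrite (rsum_ext n _ (fun _ => 0)), rsum_const; [ring | intros; simpl; ring]. Qed.

(* |w|^2 = t^2 + |z|^4 = rho^4, with w = t + i|z|^2 *)
Definition wsq n p := ptt p ^ 2 + zsq n p ^ 2.

Lemma wsq_pos n p : Hstar n p -> 0 < wsq n p.
Proof.
  intros [Hin Hne]; pose proof (zsq_nonneg n p).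
  destruct (Rle_lt_dec (wsq n p) 0) as [Hle|]; [exfalso; apply Hne | auto].
  unfold wsq in Hle; assert (Hz : zsq n p = 0) by nra.
  apply in_H_ext with n; [auto | intros i _; simpl; lra |].
  intros [i|i|] Hc; simpl; [| | nra];
    pose proof (rsum_ge_term n (fun i => px p i ^ 2 + py p i ^ 2) i ltac:(intros; nra) Hc);
    fold (zsq n p) in *; nra.
Qed.

Lemma Hstar_of_wsq_pos n p : in_H n p -> 0 < wsq n p -> Hstar n p.
Proof.
  intros H1 H2; split; auto; intros ->.
  unfold wsq in H2; rewrite zsq_origin in H2; simpl in H2; lra.
Qed.

Lemma rho_wsq n q : rho n q = sqrt (sqrt (wsq n q)).
Proof. unfold rho, wsq; do 2 f_equal; ring. Qed.

Lemma rho_sq n p : rho n p ^ 2 = sqrt (wsq n p).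
Proof. rewrite rho_wsq, pow2_sqrt by apply sqrt_pos; reflexivity. Qed.

Lemma rho_pow4 n p : rho n p ^ 4 = wsq n p.
Proof.
  replace (rho n p ^ 4) with ((rho n p ^ 2) ^ 2) by ring.
  rewrite rho_sq, pow2_sqrt; [auto | unfold wsq; nra].
Qed.

Lemma rho_pos n p : Hstar n p -> 0 < rho n p.
Proof.
  intros H; rewrite rho_wsq; apply sqrt_lt_R0, sqrt_lt_R0, wsq_pos, H.
Qed.

(** * Maps with a conformal contact differential *)

Lemma Jmap_in_H n p v : in_H n v -> in_H n (Jmap n p v).
Proof. intros Hv i Hi; simpl; destruct (Hv i Hi) as [-> ->]; split; ring. Qed.

Section ContactDifferential.
Variables (n : nat) (F : pt -> pt) (DF : pt -> pt -> pt) (lam : pt -> R).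
Hypothesis DF_in_H : forall p v, Hstar n p -> in_H n v -> in_H n (DF p v).
Hypothesis DF_deriv : forall p v c, Hstar n p -> cidx_ok n c ->
  has_dderiv (fun q => coord (F q) c) p v (coord (DF p v) c).
Hypothesis Theta_DF : forall p v, Hstar n p -> Theta n (F p) (DF p v) = lam p * Theta n p v.
Hypothesis DF_Jmap : forall p v, Hstar n p -> in_H n v -> Theta n p v = 0 ->
  DF p (Jmap n p v) = Jmap n (F p) (DF p v).

Lemma has_dmap_DF p v w : Hstar n p -> in_H n v -> has_dmap n F p v w -> w = DF p v.
Proof.
  intros Hp Hv [Hw Hd]; apply in_H_ext with n; auto; intros c Hc.
  apply has_dderiv_unique with (fun q => coord (F q) c) p v; auto.
Qed.

Lemma CR_aut_of_differential G :
  (forall p, Hstar n p -> Hstar n (F p)) -> (forall p, Hstar n p -> Hstar n (G p)) ->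
  (forall p, Hstar n p -> G (F p) = p) -> (forall p, Hstar n p -> F (G p) = p) ->
  smooth_map n (Hstar n) F -> smooth_map n (Hstar n) G -> CR_aut n F.
Proof.
  intros HF HG GF FG sF sG; unfold CR_aut; cbv zeta; split; [exists G; tauto|].
  intros p v w Hp Hv Th Hd; rewrite (has_dmap_DF p v w) by auto; split.
  - rewrite Theta_DF, Th by auto; ring.
  - intros w' Hd'; rewrite (has_dmap_DF p _ w' Hp (Jmap_in_H n p v Hv) Hd'); auto.
Qed.

Lemma preserves_form_of_differential :
  (forall p, Hstar n p -> Hstar n (F p)) ->
  (forall p, Hstar n p -> rho n (F p) ^ 2 = lam p * rho n p ^ 2) -> preserves_form n F.
Proof.
  intros HF Hrho p v w Hp Hv Hd.
  rewrite (has_dmap_DF p v w), Theta_DF, Hrho by auto.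
  pose proof (rho_pos n p Hp); pose proof (rho_pos n (F p) (HF p Hp)).
  assert (lam p * rho n p ^ 2 > 0) by (rewrite <- Hrho; auto; nra).
  assert (lam p <> 0) by (intros E; rewrite E in *; lra).
  field; split; lra.
Qed.

End ContactDifferential.

(** * Dilations *)

Lemma dil_mul a b p : dil a (dil b p) = dil (a * b) p.
Proof. apply pt_ext; try (apply functional_extensionality; intro); simpl; ring. Qed.

Lemma dil_1 p : dil 1 p = p.
Proof. apply pt_ext; try (apply functional_extensionality; intro); simpl; ring. Qed.

Lemma dil_in_H n a p : in_H n p -> in_H n (dil a p).
Proof. intros Hp i Hi; simpl; destruct (Hp i Hi) as [-> ->]; split; ring. Qed.

Lemma dil_Hstar n a p : a <> 0 -> Hstar n p -> Hstar n (dil a p).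
Proof.
  intros Ha [Hin Hne]; split; [apply dil_in_H; auto|]; intros E; apply Hne.
  rewrite <- (dil_1 p), <- (Rinv_l a Ha), <- dil_mul, E.
  apply pt_ext; try (apply functional_extensionality; intro); simpl; ring.
Qed.

Definition dil_weight (a : R) (c : cidx) : R := match c with CT => a ^ 2 | _ => a end.

Lemma coord_dil a q c : coord (dil a q) c = dil_weight a c * coord q c.
Proof. destruct c; reflexivity. Qed.

Lemma has_dderiv_dil a p v c :
  has_dderiv (fun q => coord (dil a q) c) p v (coord (dil a v) c).
Proof.
  rewrite coord_dil; apply has_dderiv_ext with (fun q => dil_weight a c * coord q c);
    [intros; symmetry; apply coord_dil | apply has_dderiv_scal, has_dderiv_coord].
Qed.

Lemma smooth_map_dil n a : smooth_map n (Hstar n) (dil a).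
Proof.
  intros c Hc k; apply Ck_ext with (fun q => dil_weight a c * coord q c);
    [intros; symmetry; apply coord_dil | apply Ck_mult; [apply Ck_const | apply Ck_coord; auto]].
Qed.

Lemma zsq_dil n a p : zsq n (dil a p) = a ^ 2 * zsq n p.
Proof. unfold zsq; rewrite <- rsum_scal; apply rsum_ext; intros; simpl; ring. Qed.

Lemma rho_dil n a p : 0 < a -> rho n (dil a p) = a * rho n p.
Proof.
  intros Ha; unfold rho; rewrite zsq_dil; change (ptt (dil a p)) with (a ^ 2 * ptt p).
  replace ((a ^ 2 * zsq n p) ^ 2 + (a ^ 2 * ptt p) ^ 2)
    with ((a ^ 2) ^ 2 * (zsq n p ^ 2 + ptt p ^ 2)) by ring.
  rewrite sqrt_mult_alt, sqrt_pow2 by nra; rewrite sqrt_mult_alt, sqrt_pow2; nra.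
Qed.

Lemma Theta_dil n a p v : Theta n (dil a p) (dil a v) = a ^ 2 * Theta n p v.
Proof.
  unfold Theta; simpl.
  rewrite (rsum_ext n _ (fun i => a ^ 2 * (px p i * py v i - py p i * px v i))),
    rsum_scal by (intros; ring).
  ring.
Qed.

Lemma Jmap_dil n a p v : Jmap n (dil a p) (dil a v) = dil a (Jmap n p v).
Proof.
  apply pt_ext; try (apply functional_extensionality; intro); simpl; try ring.
  rewrite (rsum_ext n _ (fun i => a ^ 2 * (px p i * px v i + py p i * py v i))),
    rsum_scal by (intros; ring).
  ring.
Qed.

Lemma dil_CR_aut n a : 0 < a -> CR_aut n (dil a).
Proof.
  intros Ha; apply (CR_aut_of_differential n (dil a) (fun _ => dil a) (fun _ => a ^ 2))
    with (dil (/ a)).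
  - intros p v _ Hv; apply dil_in_H, Hv.
  - intros; apply has_dderiv_dil.
  - intros; apply Theta_dil.
  - intros; symmetry; apply Jmap_dil.
  - intros; apply dil_Hstar; auto; lra.
  - intros; apply dil_Hstar; auto; apply Rinv_neq_0_compat; lra.
  - intros; rewrite dil_mul, Rinv_l, dil_1; auto; lra.
  - intros; rewrite dil_mul, Rinv_r, dil_1; auto; lra.
  - apply smooth_map_dil.
  - apply smooth_map_dil.
Qed.

Lemma dil_preserves_form n a : 0 < a -> preserves_form n (dil a).
Proof.
  intros Ha; apply (preserves_form_of_differential n (dil a) (fun _ => dil a) (fun _ => a ^ 2)).
  - intros p v _ Hv; apply dil_in_H, Hv.
  - intros; apply has_dderiv_dil.
  - intros; apply Theta_dil.
  - intros; apply dil_Hstar; auto; lra.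
  - intros; rewrite rho_dil by auto; ring.
Qed.

(** * The CR inversion *)

Definition zsq_deriv n p v := 2 * rsum n (fun i => px p i * px v i + py p i * py v i).
Definition wsq_deriv n p v := 2 * ptt p * ptt v + 2 * zsq n p * zsq_deriv n p v.

Lemma has_dderiv_zsq n p v : has_dderiv (zsq n) p v (zsq_deriv n p v).
Proof.
  unfold zsq, zsq_deriv; rewrite <- rsum_scal.
  apply (has_dderiv_rsum n (fun i q => px q i ^ 2 + py q i ^ 2)); intros i _.
  eapply has_dderiv_eq; [|apply has_dderiv_plus; apply has_dderiv_sq;
    [apply has_dderiv_px | apply has_dderiv_py]].
  simpl; ring.
Qed.

Lemma has_dderiv_wsq n p v : has_dderiv (wsq n) p v (wsq_deriv n p v).
Proof.
  apply (has_dderiv_plus (fun q => ptt q ^ 2) (fun q => zsq n q ^ 2));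
    apply has_dderiv_sq; [apply has_dderiv_ptt | apply has_dderiv_zsq].
Qed.

Lemma Ck_zsq n k U : Ck n k U (zsq n).
Proof.
  apply (Ck_rsum n U k n (fun i q => px q i ^ 2 + py q i ^ 2)); intros i Hi.
  apply Ck_plus; [apply Ck_ext with (fun q => coord q (CX i) * coord q (CX i))
                 | apply Ck_ext with (fun q => coord q (CY i) * coord q (CY i))];
    try (intros; simpl; ring); apply Ck_mult; apply Ck_coord; exact Hi.
Qed.

Lemma Ck_wsq n k U : Ck n k U (wsq n).
Proof.
  apply Ck_plus.
  - apply Ck_ext with (fun q => coord q CT * coord q CT); [intros; simpl; ring|].
    apply Ck_mult; apply Ck_coord; exact I.
  - apply Ck_ext with (fun q => zsq n q * zsq n q); [intros; simpl; ring|].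
    apply Ck_mult; apply Ck_zsq.
Qed.

Lemma cr_inv_px n q i : px (cr_inv n q) i = (px q i * ptt q + py q i * zsq n q) / wsq n q.
Proof. reflexivity. Qed.

Lemma cr_inv_py n q i : py (cr_inv n q) i = (py q i * ptt q - px q i * zsq n q) / wsq n q.
Proof. reflexivity. Qed.

Lemma cr_inv_ptt n q : ptt (cr_inv n q) = - ptt q / wsq n q.
Proof. reflexivity. Qed.

Ltac dderiv_rules := repeat first
  [ eassumption | apply has_dderiv_zsq | apply has_dderiv_px | apply has_dderiv_py
  | apply has_dderiv_ptt | apply has_dderiv_const
  | apply has_dderiv_plus | apply has_dderiv_mult ].

(* coordinatewise quotient rule for cr_inv *)
Definition cr_inv_diff n p v : pt :=
  mkpt (fun i => ((px v i * ptt p + px p i * ptt v + py v i * zsq n p + py p i * zsq_deriv n p v)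
                   * wsq n p - (px p i * ptt p + py p i * zsq n p) * wsq_deriv n p v) / wsq n p ^ 2)
       (fun i => ((py v i * ptt p + py p i * ptt v - px v i * zsq n p - px p i * zsq_deriv n p v)
                   * wsq n p - (py p i * ptt p - px p i * zsq n p) * wsq_deriv n p v) / wsq n p ^ 2)
       ((- ptt v * wsq n p + ptt p * wsq_deriv n p v) / wsq n p ^ 2).

Lemma has_dderiv_cr_inv n p v c : Hstar n p ->
  has_dderiv (fun q => coord (cr_inv n q) c) p v (coord (cr_inv_diff n p v) c).
Proof.
  intros Hp; pose proof (wsq_pos n p Hp) as HW.
  pose proof (has_dderiv_inv (wsq n) p v _ ltac:(lra) (has_dderiv_wsq n p v)).
  destruct c as [i|i|]; cbn [coord cr_inv_diff px py ptt].
  - apply has_dderiv_ext with (fun q => (px q i * ptt q + py q i * zsq n q) * / wsq n q);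
      [intros; rewrite cr_inv_px; reflexivity|].
    eapply has_dderiv_eq; [|dderiv_rules]; unfold wsq_deriv, wsq; field; unfold wsq in HW; lra.
  - apply has_dderiv_ext with (fun q => (py q i * ptt q + -1 * (px q i * zsq n q)) * / wsq n q);
      [intros; rewrite cr_inv_py; unfold Rdiv; ring|].
    eapply has_dderiv_eq; [|dderiv_rules]; unfold wsq_deriv, wsq; field; unfold wsq in HW; lra.
  - apply has_dderiv_ext with (fun q => (-1 * ptt q) * / wsq n q);
      [intros; rewrite cr_inv_ptt; unfold Rdiv; ring|].
    eapply has_dderiv_eq; [|dderiv_rules]; unfold wsq_deriv, wsq; field; unfold wsq in HW; lra.
Qed.

Lemma cr_inv_diff_in_H n p v : in_H n p -> in_H n v -> in_H n (cr_inv_diff n p v).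
Proof.
  intros Hp Hv i Hi; cbn [cr_inv_diff px py].
  destruct (Hp i Hi) as [-> ->], (Hv i Hi) as [-> ->]; split; unfold Rdiv; ring.
Qed.

Lemma Theta_cr_inv n p v : Hstar n p ->
  Theta n (cr_inv n p) (cr_inv_diff n p v) = / wsq n p * Theta n p v.
Proof.
  intros Hp; pose proof (wsq_pos n p Hp) as HW; unfold Theta.
  rewrite (rsum_ext n _ (fun i => / wsq n p ^ 2 * (wsq n p * (px p i * py v i - py p i * px v i)
        + (zsq n p * ptt v - ptt p * zsq_deriv n p v) * (px p i ^ 2 + py p i ^ 2)))).
  - rewrite rsum_scal, rsum_plus, !rsum_scal; fold (zsq n p).
    cbn [cr_inv_diff ptt]; unfold wsq_deriv, wsq in *; field; lra.
  - intros i _; cbn [cr_inv_diff px py]; rewrite cr_inv_px, cr_inv_py.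
    unfold wsq_deriv, wsq in *; field; lra.
Qed.

Lemma zsq_deriv_Jmap n p v : Theta n p v = 0 -> zsq_deriv n p (Jmap n p v) = ptt v.
Proof.
  unfold Theta, zsq_deriv; intros H; cbn [Jmap px py].
  rewrite (rsum_ext n _ (fun i => -1 * (px p i * py v i - py p i * px v i))), rsum_scal
    by (intros; ring).
  lra.
Qed.

Lemma cr_inv_diff_Jmap n p v : Hstar n p -> Theta n p v = 0 ->
  cr_inv_diff n p (Jmap n p v) = Jmap n (cr_inv n p) (cr_inv_diff n p v).
Proof.
  intros Hp Th; pose proof (wsq_pos n p Hp) as HW.
  assert (Ht : ptt (Jmap n p v) = - zsq_deriv n p v) by (unfold zsq_deriv; simpl; ring).
  unfold cr_inv_diff, wsq_deriv; rewrite Ht, (zsq_deriv_Jmap n p v Th).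
  apply pt_ext; try (apply functional_extensionality; intros i);
    cbn [Jmap px py ptt]; unfold wsq in *.
  - field; lra.
  - field; lra.
  - rewrite (rsum_ext n _ (fun i => / wsq n p * (px p i * px v i + py p i * py v i)
        + (- (ptt p * ptt v + zsq n p * zsq_deriv n p v) / wsq n p ^ 2) * (px p i ^ 2 + py p i ^ 2))).
    + rewrite rsum_plus, !rsum_scal; fold (zsq n p); unfold zsq_deriv, wsq in *; field; lra.
    + intros i _; rewrite cr_inv_px, cr_inv_py; unfold wsq in *; field; lra.
Qed.

Definition zneg (q : pt) : pt := mkpt (fun i => - px q i) (fun i => - py q i) (ptt q).

Lemma zneg_zneg q : zneg (zneg q) = q.
Proof. apply pt_ext; try (apply functional_extensionality; intro); simpl; ring. Qed.

Lemma zsq_zneg n q : zsq n (zneg q) = zsq n q.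
Proof. unfold zsq; apply rsum_ext; intros; simpl; ring. Qed.

Lemma wsq_zneg n q : wsq n (zneg q) = wsq n q.
Proof. unfold wsq; rewrite zsq_zneg; reflexivity. Qed.

Lemma zneg_Hstar n p : Hstar n p -> Hstar n (zneg p).
Proof.
  intros Hp; pose proof (wsq_pos n p Hp); destruct Hp as [Hin _].
  apply Hstar_of_wsq_pos; [|rewrite wsq_zneg; auto].
  intros i Hi; simpl; destruct (Hin i Hi) as [-> ->]; split; ring.
Qed.

Lemma smooth_map_zneg n U F : smooth_map n U F -> smooth_map n U (fun q => zneg (F q)).
Proof.
  intros HF c Hc k; pose proof (HF c Hc k) as H.
  destruct c; [apply Ck_ext with (fun q => -1 * coord (F q) (CX i))
              | apply Ck_ext with (fun q => -1 * coord (F q) (CY i)) | exact H];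
    try (intros; simpl; ring); apply Ck_mult; auto; apply Ck_const.
Qed.

Lemma zsq_cr_inv n p : wsq n p <> 0 -> zsq n (cr_inv n p) = zsq n p / wsq n p.
Proof.
  intros HW; unfold zsq at 1.
  rewrite (rsum_ext n _ (fun i => / wsq n p * (px p i ^ 2 + py p i ^ 2))), rsum_scal.
  - unfold Rdiv; fold (zsq n p); ring.
  - intros i _; rewrite cr_inv_px, cr_inv_py; unfold wsq in *; field; auto.
Qed.

Lemma wsq_cr_inv n p : wsq n p <> 0 -> wsq n (cr_inv n p) = / wsq n p.
Proof.
  intros HW; unfold wsq at 1; rewrite zsq_cr_inv, cr_inv_ptt by auto.
  unfold wsq in *; field; auto.
Qed.

Lemma cr_inv_cr_inv n p : wsq n p <> 0 -> cr_inv n (cr_inv n p) = zneg p.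
Proof.
  intros HW; apply pt_ext; try (apply functional_extensionality; intros i);
    rewrite ?cr_inv_px, ?cr_inv_py, !cr_inv_ptt, wsq_cr_inv, ?zsq_cr_inv, ?cr_inv_px, ?cr_inv_py
      by auto;
    cbn [zneg px py ptt]; unfold wsq in *; field; auto.
Qed.

Lemma cr_inv_zneg n q : cr_inv n (zneg q) = zneg (cr_inv n q).
Proof.
  apply pt_ext; try (apply functional_extensionality; intros i); cbn [zneg px py ptt];
    rewrite ?cr_inv_px, ?cr_inv_py, ?cr_inv_ptt, wsq_zneg, ?zsq_zneg; cbn [zneg px py ptt];
    unfold Rdiv; ring.
Qed.

Lemma cr_inv_Hstar n p : Hstar n p -> Hstar n (cr_inv n p).
Proof.
  intros Hp; pose proof (wsq_pos n p Hp); destruct Hp as [Hin _].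
  apply Hstar_of_wsq_pos.
  - intros i Hi; rewrite cr_inv_px, cr_inv_py; destruct (Hin i Hi) as [-> ->];
      split; unfold Rdiv; ring.
  - rewrite wsq_cr_inv by lra; apply Rinv_0_lt_compat; auto.
Qed.

Lemma smooth_map_cr_inv n : smooth_map n (Hstar n) (cr_inv n).
Proof.
  intros c Hc k.
  assert (Hinv : Ck n k (Hstar n) (fun q => / wsq n q))
    by (apply Ck_inv; [intros q Hq; pose proof (wsq_pos n q Hq); lra | apply Ck_wsq]).
  assert (Hcoord : forall c, cidx_ok n c -> Ck n k (Hstar n) (fun q => coord q c))
    by (intros; apply Ck_coord; auto).
  destruct c as [i|i|].
  - apply Ck_ext with (fun q => (coord q (CX i) * coord q CT + coord q (CY i) * zsq n q)
                                  * / wsq n q); [reflexivity|].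
    apply Ck_mult; [apply Ck_plus; apply Ck_mult|]; auto using Ck_zsq; apply Hcoord; exact I.
  - apply Ck_ext with (fun q => (coord q (CY i) * coord q CT + -1 * (coord q (CX i) * zsq n q))
                                  * / wsq n q); [intros; cbn [coord]; rewrite cr_inv_py; unfold Rdiv; ring|].
    apply Ck_mult; [apply Ck_plus; repeat apply Ck_mult|];
      auto using Ck_zsq, Ck_const; apply Hcoord; exact I.
  - apply Ck_ext with (fun q => (-1 * coord q CT) * / wsq n q);
      [intros; cbn [coord]; rewrite cr_inv_ptt; unfold Rdiv; ring|].
    apply Ck_mult; [apply Ck_mult|]; auto using Ck_const; apply Hcoord; exact I.
Qed.

Lemma rho_sq_cr_inv n p : Hstar n p -> rho n (cr_inv n p) ^ 2 = / wsq n p * rho n p ^ 2.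
Proof.
  intros Hp; pose proof (wsq_pos n p Hp).
  rewrite !rho_sq, wsq_cr_inv, sqrt_inv by lra.
  pose proof (sqrt_lt_R0 _ H).
  rewrite <- (sqrt_sqrt (wsq n p)) at 2 by lra; field; lra.
Qed.

Lemma cr_inv_CR_aut n : CR_aut n (cr_inv n).
Proof.
  apply (CR_aut_of_differential n (cr_inv n) (cr_inv_diff n) (fun p => / wsq n p))
    with (fun q => zneg (cr_inv n q)).
  - intros p v [Hp _] Hv; apply cr_inv_diff_in_H; auto.
  - intros; apply has_dderiv_cr_inv; auto.
  - apply Theta_cr_inv.
  - intros; apply cr_inv_diff_Jmap; auto.
  - apply cr_inv_Hstar.
  - intros; apply zneg_Hstar, cr_inv_Hstar; auto.
  - intros p Hp; pose proof (wsq_pos n p Hp).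
    rewrite cr_inv_cr_inv, zneg_zneg; auto; lra.
  - intros p Hp; pose proof (wsq_pos n p Hp).
    rewrite cr_inv_zneg, cr_inv_cr_inv, zneg_zneg; auto; lra.
  - apply smooth_map_cr_inv.
  - apply smooth_map_zneg, smooth_map_cr_inv.
Qed.

Lemma cr_inv_preserves_form n : preserves_form n (cr_inv n).
Proof.
  apply (preserves_form_of_differential n (cr_inv n) (cr_inv_diff n) (fun p => / wsq n p)).
  - intros p v [Hp _] Hv; apply cr_inv_diff_in_H; auto.
  - intros; apply has_dderiv_cr_inv; auto.
  - apply Theta_cr_inv.
  - apply cr_inv_Hstar.
  - apply rho_sq_cr_inv.
Qed.

(** * Curvature of Theta / rho^2 *)

Lemma derivable_pt_lim_inv_root4_pow k x : 0 < x ->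
  derivable_pt_lim (fun y => / sqrt (sqrt y) ^ k) x (- INR k / (4 * sqrt (sqrt x) ^ (k + 4))).
Proof.
  intros Hx.
  assert (Hs : 0 < sqrt x) by (apply sqrt_lt_R0; auto).
  assert (Hr : 0 < sqrt (sqrt x)) by (apply sqrt_lt_R0; auto).
  pose proof (derivable_pt_lim_comp sqrt sqrt x _ _ (derivable_pt_lim_sqrt x Hx)
     (derivable_pt_lim_sqrt (sqrt x) Hs)) as Hroot.
  set (r := sqrt (sqrt x)) in *.
  assert (Hsr : sqrt x = r ^ 2) by (unfold r; rewrite pow2_sqrt; lra).
  assert (Hrk : r ^ k <> 0) by (apply pow_nonzero; lra).
  pose proof (derivable_pt_lim_div (fct_cte 1) (fun y => y ^ k) r _ _
     (derivable_pt_lim_const 1 r) (derivable_pt_lim_pow r k) Hrk) as Hinv.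
  eapply derivable_pt_lim_ext;
    [|eapply derivable_pt_lim_eq; [|apply (derivable_pt_lim_comp _ _ x _ _ Hroot Hinv)]].
  - intros y; unfold comp, div_fct, fct_cte, Rdiv; ring.
  - fold r; rewrite Hsr; unfold fct_cte, Rsqr.
    destruct k as [|m]; [simpl; field; lra|].
    replace (S m + 4)%nat with (m + 5)%nat by lia; rewrite pow_add, S_INR; simpl pred.
    assert (r ^ m <> 0) by (apply pow_nonzero; lra).
    simpl; field; split; lra.
Qed.

Lemma has_dderiv_rho_inv_pow n k p v : Hstar n p ->
  has_dderiv (fun q => / rho n q ^ k) p v (- INR k / (4 * rho n p ^ (k + 4)) * wsq_deriv n p v).
Proof.
  intros Hp.
  assert (HW : 0 < wsq n (padd p (pscale 0 v))) by (rewrite padd_pscale0; apply wsq_pos; auto).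
  pose proof (derivable_pt_lim_comp _ _ 0 _ _ (has_dderiv_wsq n p v)
                (derivable_pt_lim_inv_root4_pow k _ HW)) as H.
  rewrite padd_pscale0, <- rho_wsq in H; unfold comp in H.
  eapply derivable_pt_lim_ext; [|eapply derivable_pt_lim_eq; [|exact H]].
  - intros; rewrite rho_wsq; reflexivity.
  - ring.
Qed.

Lemma zsq_deriv_Xv n q a : (a < n)%nat -> zsq_deriv n q (Xv q a) = 2 * px q a.
Proof.
  intros Ha; unfold zsq_deriv.
  rewrite (rsum_ext n _ (fun i => if Nat.eqb i a then px q i else 0)), rsum_kronecker;
    [ring | auto |].
  intros i _; unfold Xv, padd, pscale, ebasis; simpl; destruct (Nat.eqb i a); ring.
Qed.

Lemma zsq_deriv_Yv n q a : (a < n)%nat -> zsq_deriv n q (Yv q a) = 2 * py q a.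
Proof.
  intros Ha; unfold zsq_deriv.
  rewrite (rsum_ext n _ (fun i => if Nat.eqb i a then py q i else 0)), rsum_kronecker;
    [ring | auto |].
  intros i _; unfold Yv, padd, pscale, ebasis; simpl; destruct (Nat.eqb i a); ring.
Qed.

Lemma Xv_coords q a : px (Xv q a) a = 1 /\ py (Xv q a) a = 0 /\ ptt (Xv q a) = 2 * py q a.
Proof. unfold Xv, padd, pscale, ebasis; simpl; rewrite Nat.eqb_refl; repeat split; ring. Qed.

Lemma Yv_coords q a : px (Yv q a) a = 0 /\ py (Yv q a) a = 1 /\ ptt (Yv q a) = -2 * px q a.
Proof. unfold Yv, padd, pscale, ebasis; simpl; rewrite Nat.eqb_refl; repeat split; ring. Qed.

Section Sublaplacian.
Variables (n a : nat).
Hypothesis Ha : (a < n)%nat.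

(* X_a u, Y_a u, X_a X_a u and Y_a Y_a u for u = rho^-n *)
Definition Xu q := - INR n * (zsq n q * px q a + ptt q * py q a) * / rho n q ^ (n + 4).
Definition Yu q := - INR n * (zsq n q * py q a - ptt q * px q a) * / rho n q ^ (n + 4).
Definition XXu p := - INR n * ((zsq n p + 2 * (px p a ^ 2 + py p a ^ 2)) * / rho n p ^ (n + 4)
  - INR (n + 4) * (zsq n p * px p a + ptt p * py p a) ^ 2 * / rho n p ^ (n + 8)).
Definition YYu p := - INR n * ((zsq n p + 2 * (px p a ^ 2 + py p a ^ 2)) * / rho n p ^ (n + 4)
  - INR (n + 4) * (zsq n p * py p a - ptt p * px p a) ^ 2 * / rho n p ^ (n + 8)).

Variable p : pt.
Hypothesis Hp : Hstar n p.

Lemma has_dderiv_rho_inv_pow_Xv : has_dderiv (fun q => / rho n q ^ n) p (Xv p a) (Xu p).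
Proof.
  pose proof (rho_pos n p Hp); assert (rho n p ^ (n + 4) <> 0) by (apply pow_nonzero; lra).
  destruct (Xv_coords p a) as (_ & _ & Ht).
  eapply has_dderiv_eq; [|apply has_dderiv_rho_inv_pow; auto].
  unfold Xu, wsq_deriv; rewrite zsq_deriv_Xv, Ht by auto; field; auto.
Qed.

Lemma has_dderiv_rho_inv_pow_Yv : has_dderiv (fun q => / rho n q ^ n) p (Yv p a) (Yu p).
Proof.
  pose proof (rho_pos n p Hp); assert (rho n p ^ (n + 4) <> 0) by (apply pow_nonzero; lra).
  destruct (Yv_coords p a) as (_ & _ & Ht).
  eapply has_dderiv_eq; [|apply has_dderiv_rho_inv_pow; auto].
  unfold Yu, wsq_deriv; rewrite zsq_deriv_Yv, Ht by auto; field; auto.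
Qed.

Lemma has_dderiv_Xu : has_dderiv Xu p (Xv p a) (XXu p).
Proof.
  pose proof (rho_pos n p Hp).
  pose proof (has_dderiv_rho_inv_pow n (n + 4) p (Xv p a) Hp).
  destruct (Xv_coords p a) as (Hx & Hy & Ht).
  unfold Xu; eapply has_dderiv_eq; [|apply has_dderiv_mult; [apply has_dderiv_scal|]; dderiv_rules].
  unfold XXu, wsq_deriv; rewrite zsq_deriv_Xv, Hx, Hy, Ht by auto.
  replace (n + 4 + 4)%nat with (n + 8)%nat by lia.
  field; split; apply pow_nonzero; lra.
Qed.

Lemma has_dderiv_Yu : has_dderiv Yu p (Yv p a) (YYu p).
Proof.
  pose proof (rho_pos n p Hp).
  pose proof (has_dderiv_rho_inv_pow n (n + 4) p (Yv p a) Hp).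
  destruct (Yv_coords p a) as (Hx & Hy & Ht).
  unfold Yu; apply has_dderiv_ext with
    (fun q => - INR n * (zsq n q * py q a + -1 * (ptt q * px q a)) * / rho n q ^ (n + 4));
    [intros; ring|].
  eapply has_dderiv_eq; [|apply has_dderiv_mult; [apply has_dderiv_scal|]; dderiv_rules].
  unfold YYu, wsq_deriv; rewrite zsq_deriv_Yv, Hx, Hy, Ht by auto.
  replace (n + 4 + 4)%nat with (n + 8)%nat by lia.
  field; split; apply pow_nonzero; lra.
Qed.

Lemma XXu_plus_YYu :
  XXu p + YYu p = - INR n * (2 * zsq n p - INR n * (px p a ^ 2 + py p a ^ 2)) * / rho n p ^ (n + 4).
Proof.
  pose proof (rho_pos n p Hp); pose proof (wsq_pos n p Hp).
  assert (rho n p ^ (n + 4) <> 0) by (apply pow_nonzero; lra).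
  unfold XXu, YYu; replace (n + 8)%nat with (n + 4 + 4)%nat by lia.
  rewrite (pow_add _ (n + 4) 4), rho_pow4, plus_INR; simpl (INR 4).
  unfold wsq in *; field; split; auto; lra.
Qed.
End Sublaplacian.

Lemma sum_XXu_YYu n p : Hstar n p ->
  rsum n (fun a => XXu n a p + YYu n a p) = - INR n ^ 2 * zsq n p * / rho n p ^ (n + 4).
Proof.
  intros Hp.
  rewrite (rsum_ext n _ (fun a => - INR n * / rho n p ^ (n + 4) * (2 * zsq n p)
     + INR n ^ 2 * / rho n p ^ (n + 4) * (px p a ^ 2 + py p a ^ 2))).
  - rewrite rsum_plus, rsum_const, rsum_scal; fold (zsq n p); ring.
  - intros a Ha; rewrite XXu_plus_YYu by auto; ring.
Qed.

Lemma Rpower_inv_pow n r : (1 <= n)%nat -> 0 < r ->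
  Rpower (/ r ^ n) ((INR n + 2) / INR n) = / r ^ (n + 2).
Proof.
  intros Hn Hr; assert (0 < INR n) by (apply lt_0_INR; lia).
  unfold Rpower; rewrite ln_Rinv, ln_pow by (try apply pow_lt; auto).
  replace ((INR n + 2) / INR n * - (INR n * ln r)) with (- (INR (n + 2) * ln r))
    by (rewrite plus_INR; simpl (INR 2); field; lra).
  rewrite exp_Ropp; f_equal; apply (Rpower_pow (n + 2) r Hr).
Qed.

Definition TW_scal_rho n p := INR n * (INR n + 1) * zsq n p / (2 * rho n p ^ 2).

Lemma TW_scal_conf_rho n : (1 <= n)%nat ->
  TW_scal_conf n (Hstar n) (fun p => / rho n p ^ n) (TW_scal_rho n).
Proof.
  intros Hn; assert (0 < INR n) by (apply lt_0_INR; lia).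
  exists (fun p => / 4 * rsum n (fun a => XXu n a p + YYu n a p)); split.
  - exists (Xu n), (Yu n), (XXu n), (YYu n); intros p Hp; split; [|reflexivity].
    intros a Ha; repeat split.
    + apply has_dderiv_rho_inv_pow_Xv; auto.
    + apply has_dderiv_rho_inv_pow_Yv; auto.
    + apply has_dderiv_Xu; auto.
    + apply has_dderiv_Yu; auto.
  - intros p Hp; pose proof (rho_pos n p Hp).
    rewrite sum_XXu_YYu, Rpower_inv_pow by auto; unfold TW_scal_rho.
    replace (n + 4)%nat with (n + 2 + 2)%nat by lia; rewrite pow_add.
    assert (rho n p ^ (n + 2) <> 0) by (apply pow_nonzero; lra).
    field; repeat split; auto; try lra; apply pow_nonzero; lra.
Qed.

Lemma TW_scal_rho_nonneg n p : Hstar n p -> TW_scal_rho n p >= 0.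
Proof.
  intros Hp; pose proof (rho_pos n p Hp); pose proof (zsq_nonneg n p); pose proof (pos_INR n).
  unfold TW_scal_rho, Rdiv; apply Rle_ge, Rmult_le_pos;
    [apply Rmult_le_pos; nra | apply Rlt_le, Rinv_0_lt_compat; nra].
Qed.

Lemma TW_scal_rho_pos n p i : Hstar n p -> (i < n)%nat -> px p i <> 0 \/ py p i <> 0 ->
  TW_scal_rho n p > 0.
Proof.
  intros Hp Hi Hne; pose proof (rho_pos n p Hp); pose proof (zsq_pos n p i Hi Hne).
  assert (0 < INR n) by (apply lt_0_INR; lia).
  unfold TW_scal_rho; apply Rdiv_lt_0_compat; [apply Rmult_lt_0_compat; nra | nra].
Qed.

Theorem mainTheorem5 (n : nat) (hn : (1 <= n)%nat) :
  (forall a : R, a > 0 -> CR_aut n (dil a) /\ preserves_form n (dil a)) /\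
  (CR_aut n (cr_inv n) /\ preserves_form n (cr_inv n)) /\
  (let Rc := fun p => INR n * (INR n + 1) * zsq n p / (2 * rho n p ^ 2) in
   TW_scal_conf n (Hstar n) (fun p => / rho n p ^ n) Rc /\
   (forall p, Hstar n p -> Rc p >= 0) /\
   (forall p, Hstar n p ->
      (exists i, (i < n)%nat /\ (px p i <> 0 \/ py p i <> 0)) -> Rc p > 0)).
Proof.
  split; [intros a Ha; split; [apply dil_CR_aut | apply dil_preserves_form]; auto|].
  split; [split; [apply cr_inv_CR_aut | apply cr_inv_preserves_form]|].
  split; [|split].
  - apply TW_scal_conf_rho; auto.
  - apply TW_scal_rho_nonneg.
  - intros p Hp [i [Hi Hne]]; apply TW_scal_rho_pos with i; auto.
Qed.
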